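(* Let $S$ be a set of anchored rectangles in the plane. Then it is possible to maintain a conflict-free coloring of $S$ (with respect to points) under insertions and deletions of rectangles that uses $O(\log n)$ colors and performs $O(\log n)$ recolorings per insertion and per deletion, where $n$ is the current number of rectangles in $S$.
   Context: A rectangle is anchored if its bottom-left vertex lies at the origin. A coloring of a set $S$ of regions is conflict-free (with respect to points) if for every point $q$ lying in at least one region of $S$, among the regions of $S$ containing $q$ there is one whose color is unique among them. A recoloring is a change of the color of one object already in the set; the number of recolorings per update is the number of objects whose color changes. *)

From Stdlib Require Import Reals List Arith.
Import ListNotations.
Open Scope R_scope.

(* An anchored rectangle [0,rx] x [0,ry], identified by its top-right corner. *)
Record rect := Rect { rx : R; ry : R }.

Definition valid_rect (r : rect) : Prop := 0 < rx r /\ 0 < ry r.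

Definition contains (r : rect) (q : R * R) : Prop :=
  0 <= fst q <= rx r /\ 0 <= snd q <= ry r.

Definition rect_eq_dec (r1 r2 : rect) : {r1 = r2} + {r1 <> r2}.
Proof.
  destruct r1 as [a b], r2 as [c d].
  destruct (Req_EM_T a c) as [H1|H1]; [destruct (Req_EM_T b d) as [H2|H2]|].
  - left; subst; reflexivity.
  - right; intro H; inversion H; contradiction.
  - right; intro H; inversion H; contradiction.
Defined.

Definition conflict_free (S : list rect) (col : rect -> nat) : Prop :=
  forall q : R * R,
    (exists r, In r S /\ contains r q) ->
    exists r, In r S /\ contains r q /\
      forall r', In r' S -> contains r' q -> r' <> r -> col r' <> col r.

Definition num_colors (S : list rect) (col : rect -> nat) : nat :=
  length (nodup Nat.eq_dec (map col S)).

Definition recolorings (S S' : list rect) (col col' : rect -> nat) : nat :=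
  length (filter (fun r => if in_dec rect_eq_dec r S'
                           then negb (Nat.eqb (col r) (col' r)) else false) S).

Inductive update := Ins (r : rect) | Del (r : rect).

Definition step (S : list rect) (u : update) : list rect :=
  match u with
  | Ins r => r :: S
  | Del r => remove rect_eq_dec r S
  end.

Definition cur (h : list update) : list rect := fold_left step h [].

Definition legal (S : list rect) (u : update) : Prop :=
  match u with
  | Ins r => valid_rect r /\ ~ In r S
  | Del r => In r S
  end.

Inductive valid_hist : list update -> Prop :=
| vh_nil : valid_hist []
| vh_snoc : forall h u, valid_hist h -> legal (cur h) u -> valid_hist (h ++ [u]).

From Stdlib Require Import Reals List Lia Lra Permutation Sorted Classical.
Import ListNotations.
Local Open Scope nat_scope.

(* Keep the rectangles in the leaves of an AVL tree, ordered from left to right by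
   [rx].  Every internal node marks the highest rectangle of its right subtree with
   its own height, and a rectangle is colored by the largest height marking it (0 if
   it is unmarked).  A rectangle contains q iff [rx >= qx] and [ry >= qy].  At a node
   with subtrees l and r: if the highest rectangle v of r contains q, its color is the
   height of the node, larger than all other colors below it.  Otherwise, if some
   rectangle of l contains q, then v lies to its right, so [ry v < qy] and no
   rectangle of r contains q: recurse into l; else recurse into r.  Hence the
   coloring is conflict-free with at most height + 1 = O(log n) colors.  An insertion
   or deletion, rotations included, changes O(1) marks per level along one root
   path, hence O(log n) colors. *)

Lemma StronglySorted_app_iff {A} (R : A -> A -> Prop) (l1 l2 : list A) :
  StronglySorted R (l1 ++ l2) <->
  StronglySorted R l1 /\ StronglySorted R l2 /\ (forall a b, In a l1 -> In b l2 -> R a b).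
Proof.
  induction l1 as [|x l1 IH]; simpl.
  - split; [intros H; repeat split; auto; [constructor | intros ? ? []]|tauto].
  - split.
    + intros [Hs Hf]%StronglySorted_inv. rewrite Forall_forall in Hf.
      apply IH in Hs as (S1 & S2 & S12). repeat split; auto.
      * constructor; auto. rewrite Forall_forall. intros b Hb. apply Hf, in_or_app; auto.
      * intros a b [<-|Ha] Hb; auto. apply Hf, in_or_app; auto.
    + intros ([S1 Hf]%StronglySorted_inv & S2 & S12). rewrite Forall_forall in Hf.
      constructor; [apply IH; auto|]. rewrite Forall_forall. intros b Hb.
      apply in_app_or in Hb as [Hb|Hb]; auto.
Qed.

Lemma StronglySorted_remove {A} (R : A -> A -> Prop) eq_dec (x : A) l :
  StronglySorted R l -> StronglySorted R (remove eq_dec x l).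
Proof.
  induction 1 as [|a l Hs IH Hf]; simpl; [constructor|].
  destruct (eq_dec x a); auto. constructor; auto.
  rewrite Forall_forall in *. intros b Hb. apply Hf. eapply in_remove; eauto.
Qed.

Lemma Permutation_remove {A} eq_dec (x : A) l l' :
  Permutation l l' -> Permutation (remove eq_dec x l) (remove eq_dec x l').
Proof.
  induction 1 as [| a l l' _ IH | a b l | l l' l'' _ IH1 _ IH2]; simpl.
  - constructor.
  - destruct (eq_dec x a); auto.
  - destruct (eq_dec x a), (eq_dec x b); auto using Permutation_refl, perm_swap.
  - eauto using Permutation_trans.
Qed.

Lemma remove_NoDup {A} eq_dec (x : A) l : NoDup l -> NoDup (remove eq_dec x l).
Proof.
  induction 1 as [|a l Ha _ IH]; simpl; [constructor|].
  destruct (eq_dec x a); auto. constructor; auto.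
  intros Hin. apply Ha. eapply in_remove; eauto.
Qed.

Lemma length_remove_NoDup {A} eq_dec (x : A) l :
  NoDup l -> length l <= S (length (remove eq_dec x l)).
Proof.
  induction 1 as [|a l Ha _ IH]; simpl; [lia|].
  destruct (eq_dec x a) as [<-|]; simpl; [rewrite notin_remove|]; auto; lia.
Qed.

Lemma NoDup_app_notin {A} (l1 l2 : list A) a : NoDup (l1 ++ l2) -> In a l1 -> ~ In a l2.
Proof.
  intros N Ha Hb. apply in_split in Ha as (x & y & ->).
  rewrite <- app_assoc in N. apply NoDup_remove_2 in N.
  apply N, in_or_app. right. apply in_or_app; auto.
Qed.

(** * AVL trees *)

Inductive tree := Leaf (p : rect) | Node (l r : tree).

Fixpoint height (t : tree) : nat :=
  match t with Leaf _ => 0 | Node l r => S (Nat.max (height l) (height r)) end.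

Fixpoint leaves (t : tree) : list rect :=
  match t with Leaf p => [p] | Node l r => leaves l ++ leaves r end.

Fixpoint rightmost (t : tree) : rect :=
  match t with Leaf p => p | Node _ r => rightmost r end.

Fixpoint highest (t : tree) : rect :=
  match t with
  | Leaf p => p
  | Node l r => if Rle_dec (ry (highest l)) (ry (highest r)) then highest r else highest l
  end.

Fixpoint balanced (t : tree) : Prop :=
  match t with
  | Leaf _ => True
  | Node l r =>
      balanced l /\ balanced r /\ height l <= S (height r) /\ height r <= S (height l)
  end.

Definition rx_le (a b : rect) : Prop := (rx a <= rx b)%R.

Definition rotate_right (t : tree) : tree :=
  match t with Node (Node a b) c => Node a (Node b c) | _ => t end.

Definition rotate_left (t : tree) : tree :=
  match t with Node a (Node b c) => Node (Node a b) c | _ => t end.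

Definition rebalance (l r : tree) : tree :=
  if S (height r) <? height l then
    match l with
    | Node ll lr =>
        if height lr <=? height ll then rotate_right (Node l r)
        else rotate_right (Node (rotate_left l) r)
    | Leaf _ => Node l r
    end
  else if S (height l) <? height r then
    match r with
    | Node rl rr =>
        if height rl <=? height rr then rotate_left (Node l r)
        else rotate_left (Node l (rotate_right r))
    | Leaf _ => Node l r
    end
  else Node l r.

Lemma leaves_rotate_right t : leaves (rotate_right t) = leaves t.
Proof. destruct t as [|[|a b] c]; simpl; rewrite ?app_assoc; reflexivity. Qed.

Lemma leaves_rotate_left t : leaves (rotate_left t) = leaves t.
Proof. destruct t as [|a [|b c]]; simpl; rewrite ?app_assoc; reflexivity. Qed.

Lemma leaves_rebalance l r : leaves (rebalance l r) = leaves l ++ leaves r.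
Proof.
  unfold rebalance.
  destruct (_ <? _); [destruct l; [|destruct (_ <=? _)]
                     |destruct (_ <? _); [destruct r; [|destruct (_ <=? _)]|]];
    rewrite ?leaves_rotate_right, ?leaves_rotate_left; cbn [leaves];
    rewrite ?leaves_rotate_right, ?leaves_rotate_left; reflexivity.
Qed.

Lemma rebalance_id l r :
  height l <= S (height r) -> height r <= S (height l) -> rebalance l r = Node l r.
Proof.
  intros Hl Hr. unfold rebalance.
  destruct (Nat.ltb_spec (S (height r)) (height l)); [lia|].
  destruct (Nat.ltb_spec (S (height l)) (height r)); [lia|reflexivity].
Qed.

Lemma rebalance_balanced l r :
  balanced l -> balanced r -> height l <= height r + 2 -> height r <= height l + 2 ->
  balanced (rebalance l r) /\
  Nat.max (height l) (height r) <= height (rebalance l r) <= S (Nat.max (height l) (height r)).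
Proof.
  intros Bl Br Hl Hr. unfold rebalance.
  destruct (Nat.ltb_spec (S (height r)) (height l)).
  - destruct l as [p|ll lr]; cbn [balanced height] in *; [lia|].
    destruct Bl as (Bll & Blr & H1 & H2).
    destruct (Nat.leb_spec (height lr) (height ll)).
    + cbn [balanced height rotate_left rotate_right]. repeat split; auto; lia.
    + destruct lr as [p|lrl lrr]; cbn [balanced height] in *; [lia|].
      destruct Blr as (B1 & B2 & H5 & H6).
      cbn [balanced height rotate_left rotate_right]. repeat split; auto; lia.
  - destruct (Nat.ltb_spec (S (height l)) (height r)).
    + destruct r as [p|rl rr]; cbn [balanced height] in *; [lia|].
      destruct Br as (Brl & Brr & H1 & H2).
      destruct (Nat.leb_spec (height rl) (height rr)).
      * cbn [balanced height rotate_left rotate_right]. repeat split; auto; lia.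
      * destruct rl as [p|rll rlr]; cbn [balanced height] in *; [lia|].
        destruct Brl as (B1 & B2 & H5 & H6).
        cbn [balanced height rotate_left rotate_right]. repeat split; auto; lia.
    + cbn [balanced height rotate_left rotate_right]. repeat split; auto; lia.
Qed.

Lemma highest_in t : In (highest t) (leaves t).
Proof.
  induction t as [p|l IHl r IHr]; simpl; auto.
  destruct (Rle_dec _ _); apply in_or_app; auto.
Qed.

Lemma ry_le_highest t p : In p (leaves t) -> (ry p <= ry (highest t))%R.
Proof.
  induction t as [q|l IHl r IHr]; simpl; intros Hp.
  - destruct Hp as [<-|[]]. lra.
  - destruct (Rle_dec _ _); apply in_app_or in Hp as [Hp|Hp];
      [apply IHl in Hp | | | apply IHr in Hp]; auto; lra.
Qed.

Lemma rightmost_in t : In (rightmost t) (leaves t).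
Proof. induction t; simpl; auto using in_or_app. Qed.

Lemma rx_le_rightmost t p :
  StronglySorted rx_le (leaves t) -> In p (leaves t) -> rx_le p (rightmost t).
Proof.
  induction t as [q|l IHl r IHr]; simpl; intros Hs Hp.
  - destruct Hp as [<-|[]]. unfold rx_le. lra.
  - apply StronglySorted_app_iff in Hs as (Sl & Sr & Slr).
    apply in_app_or in Hp as [Hp|Hp]; auto using rightmost_in.
Qed.

Fixpoint insert (z : rect) (t : tree) : tree :=
  match t with
  | Leaf p => if Rle_dec (rx z) (rx p) then Node (Leaf z) (Leaf p) else Node (Leaf p) (Leaf z)
  | Node l r =>
      if Rle_dec (rx z) (rx (rightmost l)) then rebalance (insert z l) r
      else rebalance l (insert z r)
  end.

Lemma insert_perm z t : Permutation (leaves (insert z t)) (z :: leaves t).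
Proof.
  induction t as [p|l IHl r IHr]; simpl.
  - destruct (Rle_dec _ _); simpl; auto using perm_swap.
  - destruct (Rle_dec _ _); rewrite leaves_rebalance.
    + apply (Permutation_app_tail _ IHl).
    + rewrite (Permutation_app_head _ IHr). apply Permutation_sym, Permutation_middle.
Qed.

Lemma insert_sorted z t :
  StronglySorted rx_le (leaves t) -> StronglySorted rx_le (leaves (insert z t)).
Proof.
  unfold rx_le. induction t as [p|l IHl r IHr]; simpl; intros Hs.
  - destruct (Rle_dec _ _);
      repeat (apply SSorted_cons || apply SSorted_nil || apply Forall_cons || apply Forall_nil);
      lra.
  - pose proof Hs as (Sl & Sr & Slr)%StronglySorted_app_iff.
    destruct (Rle_dec _ _) as [Hz|Hz]; rewrite leaves_rebalance;
      apply StronglySorted_app_iff; repeat split; auto.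
    + intros a b Ha Hb. apply (Permutation_in _ (insert_perm z l)) in Ha as [<-|Ha]; auto.
      eapply Rle_trans; [apply Hz|]. apply Slr; auto using rightmost_in.
    + intros a b Ha Hb. apply (Permutation_in _ (insert_perm z r)) in Hb as [<-|Hb]; auto.
      pose proof (rx_le_rightmost l a Sl Ha). unfold rx_le in *. lra.
Qed.

Lemma insert_balanced z t :
  balanced t -> balanced (insert z t) /\ height t <= height (insert z t) <= S (height t).
Proof.
  induction t as [p|l IHl r IHr]; intros Bt.
  - simpl. destruct (Rle_dec _ _); simpl; lia.
  - cbn [balanced insert height] in *. destruct Bt as (Bl & Br & Hl & Hr).
    destruct (Rle_dec _ _).
    + destruct (IHl Bl) as [Bi Hi].
      destruct (rebalance_balanced (insert z l) r) as [B H]; auto; try lia.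
      split; auto.
      destruct (Nat.le_gt_cases (height (insert z l)) (S (height r)));
        [rewrite rebalance_id by lia; cbn [height]|]; lia.
    + destruct (IHr Br) as [Bi Hi].
      destruct (rebalance_balanced l (insert z r)) as [B H]; auto; try lia.
      split; auto.
      destruct (Nat.le_gt_cases (height (insert z r)) (S (height l)));
        [rewrite rebalance_id by lia; cbn [height]|]; lia.
Qed.

(* The search is by membership rather than by [rx], since distinct rectangles may
   share the same [rx]. *)
Fixpoint delete (z : rect) (t : tree) : option tree :=
  match t with
  | Leaf p => if rect_eq_dec z p then None else Some t
  | Node l r =>
      if in_dec rect_eq_dec z (leaves l) then
        match delete z l with None => Some r | Some l' => Some (rebalance l' r) end
      else
        match delete z r with None => Some l | Some r' => Some (rebalance l r') end
  end.

Definition oleaves (o : option tree) : list rect :=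
  match o with Some t => leaves t | None => [] end.

Lemma delete_leaves z t :
  NoDup (leaves t) -> oleaves (delete z t) = remove rect_eq_dec z (leaves t).
Proof.
  induction t as [p|l IHl r IHr]; simpl; intros N.
  - destruct (rect_eq_dec z p); reflexivity.
  - pose proof (NoDup_app_remove_r _ _ N) as Nl. pose proof (NoDup_app_remove_l _ _ N) as Nr.
    rewrite remove_app. destruct (in_dec rect_eq_dec z (leaves l)) as [I|I].
    + rewrite (notin_remove _ (leaves r)) by (eapply NoDup_app_notin; eauto).
      rewrite <- IHl by auto. destruct (delete z l); simpl; rewrite ?leaves_rebalance; auto.
    + rewrite (notin_remove _ (leaves l)), <- IHr by auto.
      destruct (delete z r); simpl; rewrite ?leaves_rebalance, ?app_nil_r; auto.
Qed.

Lemma delete_None z t : delete z t = None -> exists p, t = Leaf p.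
Proof.
  destruct t as [p|l r]; simpl; eauto.
  destruct (in_dec _ _ _); [destruct (delete z l)|destruct (delete z r)]; discriminate.
Qed.

Lemma delete_balanced z t t' :
  balanced t -> delete z t = Some t' ->
  balanced t' /\ height t' <= height t <= S (height t').
Proof.
  revert t'. induction t as [p|l IHl r IHr]; intros t' Bt D.
  - simpl in D. destruct (rect_eq_dec z p); inversion D; subst. simpl. lia.
  - cbn [balanced delete height] in *. destruct Bt as (Bl & Br & Hl & Hr).
    destruct (in_dec _ _ _).
    + destruct (delete z l) as [l'|] eqn:E; inversion D; subst.
      * destruct (IHl l' Bl eq_refl) as [Bd Hd].
        destruct (rebalance_balanced l' r) as [B H]; auto; try lia.
        split; auto.
        destruct (Nat.le_gt_cases (height r) (S (height l')));
          [rewrite rebalance_id by lia; cbn [height]|]; lia.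
      * apply delete_None in E as [p ->]. cbn [height] in *. split; auto; lia.
    + destruct (delete z r) as [r'|] eqn:E; inversion D; subst.
      * destruct (IHr r' Br eq_refl) as [Bd Hd].
        destruct (rebalance_balanced l r') as [B H]; auto; try lia.
        split; auto.
        destruct (Nat.le_gt_cases (height l) (S (height r')));
          [rewrite rebalance_id by lia; cbn [height]|]; lia.
      * apply delete_None in E as [p ->]. cbn [height] in *. split; auto; lia.
Qed.

(** * The coloring *)

Fixpoint marks (t : tree) : list (rect * nat) :=
  match t with
  | Leaf _ => []
  | Node l r => (highest r, height (Node l r)) :: marks l ++ marks r
  end.

Fixpoint color (t : tree) (p : rect) : nat :=
  match t with
  | Leaf _ => 0
  | Node l r =>
      if rect_eq_dec p (highest r) then height (Node l r) else Nat.max (color l p) (color r p)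
  end.

Lemma color_le_height t p : color t p <= height t.
Proof.
  induction t as [q|l IHl r IHr]; simpl; [lia|]. destruct (rect_eq_dec _ _); simpl; lia.
Qed.

Lemma color_notin t p : ~ In p (leaves t) -> color t p = 0.
Proof.
  induction t as [q|l IHl r IHr]; simpl; intros Hp; auto.
  destruct (rect_eq_dec p (highest r)) as [->|].
  - exfalso. apply Hp, in_or_app. right. apply highest_in.
  - rewrite IHl, IHr; auto using in_or_app.
Qed.

Lemma marks_height_le t e : In e (marks t) -> snd e <= height t.
Proof.
  induction t as [q|l IHl r IHr]; simpl; intros He; [destruct He|].
  destruct He as [<-|He]; simpl; [lia|].
  apply in_app_or in He as [He|He]; [apply IHl in He|apply IHr in He]; lia.
Qed.

Lemma color_in_marks t p : 0 < color t p -> In (p, color t p) (marks t).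
Proof.
  induction t as [q|l IHl r IHr]; simpl; intros Hp; [lia|].
  destruct (rect_eq_dec p (highest r)) as [->|]; [left; reflexivity|].
  right. apply in_or_app.
  destruct (Nat.max_spec (color l p) (color r p)) as [[_ E]|[_ E]];
    rewrite E in *; [right|left]; auto.
Qed.

Lemma marks_le_color t p h : In (p, h) (marks t) -> h <= color t p.
Proof.
  induction t as [q|l IHl r IHr]; simpl; intros Hp; [destruct Hp|].
  destruct (rect_eq_dec p (highest r)).
  - destruct Hp as [[=]|Hp]; [simpl; lia|].
    apply in_app_or in Hp as [Hp|Hp]; apply marks_height_le in Hp; cbn [height snd] in *; lia.
  - destruct Hp as [[=]|Hp]; [congruence|].
    apply in_app_or in Hp as [Hp|Hp]; [apply IHl in Hp|apply IHr in Hp]; lia.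
Qed.

Lemma color_Node_l l r p :
  NoDup (leaves (Node l r)) -> In p (leaves l) -> color (Node l r) p = color l p.
Proof.
  simpl. intros N Hp. pose proof (NoDup_app_notin _ _ _ N Hp) as Hr.
  destruct (rect_eq_dec p (highest r)) as [->|].
  - destruct (Hr (highest_in r)).
  - rewrite (color_notin r p Hr). lia.
Qed.

Lemma color_Node_r l r p :
  NoDup (leaves (Node l r)) -> In p (leaves r) -> p <> highest r ->
  color (Node l r) p = color r p.
Proof.
  simpl. intros N Hp Hne.
  assert (Hl : ~ In p (leaves l)) by (intros Hl; exact (NoDup_app_notin _ _ _ N Hl Hp)).
  destruct (rect_eq_dec p (highest r)); [congruence|].
  rewrite (color_notin l p Hl). lia.
Qed.

Lemma color_Node_highest l r : color (Node l r) (highest r) = height (Node l r).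
Proof. simpl. destruct (rect_eq_dec _ _); congruence. Qed.

Lemma color_Node_lt l r p :
  NoDup (leaves (Node l r)) -> In p (leaves (Node l r)) -> p <> highest r ->
  color (Node l r) p < height (Node l r).
Proof.
  intros N Hp Hne. simpl in Hp. apply in_app_or in Hp as [Hp|Hp].
  - rewrite color_Node_l by auto. pose proof (color_le_height l p). simpl. lia.
  - rewrite color_Node_r by auto. pose proof (color_le_height r p). simpl. lia.
Qed.

Lemma contains_corner u w v q :
  contains u q -> contains w q -> (rx u <= rx v)%R -> (ry w <= ry v)%R -> contains v q.
Proof. unfold contains. lra. Qed.

Lemma color_conflict_free t q :
  NoDup (leaves t) -> StronglySorted rx_le (leaves t) ->
  (exists a, In a (leaves t) /\ contains a q) ->
  exists a, In a (leaves t) /\ contains a q /\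
    forall b, In b (leaves t) -> contains b q -> b <> a -> color t b < color t a.
Proof.
  induction t as [p|l IHl r IHr]; intros N Hs Hq.
  - destruct Hq as (a & Ha & Ca). exists a. split; [|split]; auto using in_or_app.
    intros b Hb _ Hne. simpl in Ha, Hb. intuition congruence.
  - cbn [leaves] in *.
    pose proof (NoDup_app_remove_r _ _ N) as Nl. pose proof (NoDup_app_remove_l _ _ N) as Nr.
    pose proof Hs as (Sl & Sr & Slr)%StronglySorted_app_iff.
    destruct (classic (contains (highest r) q)) as [Ch|Ch].
    { exists (highest r). split; [|split]; auto using in_or_app, highest_in.
      intros b Hb _ Hne. rewrite color_Node_highest. apply color_Node_lt; auto. }
    destruct (classic (exists a, In a (leaves l) /\ contains a q)) as [El|El].
    + destruct (IHl Nl Sl El) as (a & Ha & Ca & Hmax).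
      exists a. split; [|split]; auto using in_or_app.
      intros b Hb Cb Hne. apply in_app_or in Hb as [Hb|Hb].
      * rewrite !color_Node_l; auto.
      * destruct Ch. apply (contains_corner a b); auto using ry_le_highest.
        apply Slr; auto using highest_in.
    + assert (Er : exists a, In a (leaves r) /\ contains a q).
      { destruct Hq as (a & Ha & Ca). apply in_app_or in Ha as [Ha|Ha]; eauto.
        destruct El; eauto. }
      destruct (IHr Nr Sr Er) as (a & Ha & Ca & Hmax).
      assert (a <> highest r) by (intros ->; auto).
      exists a. split; [|split]; auto using in_or_app.
      intros b Hb Cb Hne. apply in_app_or in Hb as [Hb|Hb].
      * destruct El; eauto.
      * assert (b <> highest r) by (intros ->; auto).
        rewrite !color_Node_r; auto.
Qed.

(** * Counting recolorings *)

Definition differ_by (k : nat) (A B : list (rect * nat)) : Prop :=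
  exists E, length E <= k /\ incl A (E ++ B) /\ incl B (E ++ A).

Ltac solve_incl :=
  simpl in *; repeat rewrite in_app_iff in *; simpl in *; repeat rewrite in_app_iff in *; tauto.

Lemma differ_by_refl k A : differ_by k A A.
Proof. exists []. split; [simpl; lia|split; apply incl_refl]. Qed.

Lemma differ_by_weaken k k' A B : k <= k' -> differ_by k A B -> differ_by k' A B.
Proof. intros Hk (E & HE & H1 & H2). exists E. split; auto. lia. Qed.

Lemma differ_by_trans k m A B C :
  differ_by k A B -> differ_by m B C -> differ_by (k + m) A C.
Proof.
  intros (E & HE & H1 & H2) (F & HF & H3 & H4). exists (E ++ F).
  rewrite length_app. split; [lia|split]; intros x Hx.
  - specialize (H1 x Hx). rewrite !in_app_iff in *. destruct H1 as [|Hx']; auto.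
    specialize (H3 x Hx'). rewrite in_app_iff in H3. tauto.
  - specialize (H4 x Hx). rewrite !in_app_iff in *. destruct H4 as [|Hx']; auto.
    specialize (H2 x Hx'). rewrite in_app_iff in H2. tauto.
Qed.

Lemma differ_by_Node_l k l l' r :
  differ_by k (marks l) (marks l') -> differ_by (k + 2) (marks (Node l r)) (marks (Node l' r)).
Proof.
  intros (E & HE & H1 & H2).
  exists ((highest r, height (Node l r)) :: (highest r, height (Node l' r)) :: E).
  split; [simpl; lia|split]; intros x Hx; [specialize (H1 x)|specialize (H2 x)]; solve_incl.
Qed.

Lemma differ_by_Node_r k l r r' :
  differ_by k (marks r) (marks r') -> differ_by (k + 2) (marks (Node l r)) (marks (Node l r')).
Proof.
  intros (E & HE & H1 & H2).
  exists ((highest r, height (Node l r)) :: (highest r', height (Node l r')) :: E).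
  split; [simpl; lia|split]; intros x Hx; [specialize (H1 x)|specialize (H2 x)]; solve_incl.
Qed.

Lemma differ_by_rotate_right t : differ_by 4 (marks (rotate_right t)) (marks t).
Proof.
  destruct t as [p|[p|a b] c]; try apply differ_by_refl.
  exists [(highest (Node b c), height (Node a (Node b c))); (highest c, height (Node b c));
          (highest c, height (Node (Node a b) c)); (highest b, height (Node a b))].
  split; [simpl; lia|split; intros x Hx; solve_incl].
Qed.

Lemma differ_by_rotate_left t : differ_by 4 (marks (rotate_left t)) (marks t).
Proof.
  destruct t as [p|a [p|b c]]; try apply differ_by_refl.
  exists [(highest c, height (Node (Node a b) c)); (highest b, height (Node a b));
          (highest (Node b c), height (Node a (Node b c))); (highest c, height (Node b c))].
  split; [simpl; lia|split; intros x Hx; solve_incl].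
Qed.

Lemma differ_by_rebalance l r : differ_by 10 (marks (rebalance l r)) (marks (Node l r)).
Proof.
  unfold rebalance.
  destruct (_ <? _); [destruct l as [p|ll lr]; [|destruct (_ <=? _)]
                     |destruct (_ <? _); [destruct r as [p|rl rr]; [|destruct (_ <=? _)]|]];
    try apply differ_by_refl;
    try (eapply differ_by_weaken;
         [|apply differ_by_rotate_right || apply differ_by_rotate_left]; lia).
  - eapply (differ_by_trans 4 6); [apply differ_by_rotate_right|].
    apply (differ_by_Node_l 4), differ_by_rotate_left.
  - eapply (differ_by_trans 4 6); [apply differ_by_rotate_left|].
    apply (differ_by_Node_r 4), differ_by_rotate_right.
Qed.

Lemma differ_by_insert z t : differ_by (12 * S (height t)) (marks (insert z t)) (marks t).
Proof.
  induction t as [p|l IHl r IHr]; cbn [insert].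
  - destruct (Rle_dec _ _); [exists [(p, 1)]|exists [(z, 1)]];
      (split; [simpl; lia|split; intros x Hx; solve_incl]).
  - destruct (Rle_dec _ _); (eapply differ_by_weaken; [|eapply differ_by_trans;
      [apply differ_by_rebalance|apply differ_by_Node_l, IHl || apply differ_by_Node_r, IHr]]);
      cbn [height]; lia.
Qed.

Lemma differ_by_delete z t t' :
  delete z t = Some t' -> differ_by (12 * S (height t)) (marks t') (marks t).
Proof.
  revert t'. induction t as [p|l IHl r IHr]; intros t' D; cbn [delete] in D.
  - destruct (rect_eq_dec z p); inversion D; subst. apply differ_by_refl.
  - destruct (in_dec _ _ _);
      [destruct (delete z l) as [l'|] eqn:E|destruct (delete z r) as [r'|] eqn:E];
      inversion D; subst.
    + eapply differ_by_weaken; [|eapply differ_by_trans;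
        [apply differ_by_rebalance|apply differ_by_Node_l, IHl; reflexivity]].
      cbn [height]; lia.
    + apply delete_None in E as [p ->].
      exists [(highest t', height (Node (Leaf p) t'))].
      split; [simpl; lia|split; intros x Hx; solve_incl].
    + eapply differ_by_weaken; [|eapply differ_by_trans;
        [apply differ_by_rebalance|apply differ_by_Node_r, IHr; reflexivity]].
      cbn [height]; lia.
    + apply delete_None in E as [p ->].
      exists [(highest (Leaf p), height (Node t' (Leaf p)))].
      split; [simpl; lia|split; intros x Hx; solve_incl].
Qed.

(** * Height of balanced trees *)

Lemma pow2_div2_le_mono a b : a <= b -> 2 ^ Nat.div2 a <= 2 ^ Nat.div2 b.
Proof.
  intros H. apply Nat.pow_le_mono_r; [lia|].
  rewrite !Nat.div2_div. apply Nat.Div0.div_le_mono; lia.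
Qed.

Lemma pow2_div2_succ_le m : 2 ^ Nat.div2 (S m) <= 2 ^ Nat.div2 m + 2 ^ Nat.div2 (m - 1).
Proof.
  destruct m as [|k]; [simpl; lia|].
  replace (S k - 1) with k by lia.
  change (Nat.div2 (S (S k))) with (S (Nat.div2 k)).
  pose proof (pow2_div2_le_mono k (S k) (Nat.le_succ_diag_r k)).
  rewrite Nat.pow_succ_r'. lia.
Qed.

Lemma balanced_size t : balanced t -> 2 ^ Nat.div2 (height t) <= length (leaves t).
Proof.
  induction t as [p|l IHl r IHr]; intros Bt; cbn [balanced height leaves] in *; [simpl; lia|].
  destruct Bt as (Bl & Br & Hl & Hr). rewrite length_app.
  specialize (IHl Bl). specialize (IHr Br).
  destruct (Nat.max_spec (height l) (height r)) as [[H ->]|[H ->]].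
  - pose proof (pow2_div2_succ_le (height r)).
    pose proof (pow2_div2_le_mono (height r - 1) (height l) ltac:(lia)). lia.
  - pose proof (pow2_div2_succ_le (height l)).
    pose proof (pow2_div2_le_mono (height l - 1) (height r) ltac:(lia)). lia.
Qed.

Lemma height_le_log2 t : balanced t -> height t <= 2 * Nat.log2 (length (leaves t)) + 1.
Proof.
  intros Bt. apply balanced_size, Nat.log2_le_mono in Bt.
  rewrite Nat.log2_pow2 in Bt by apply Nat.le_0_l.
  pose proof (Nat.div2_odd (height t)). destruct (Nat.odd (height t)); simpl in *; lia.
Qed.

(** * The dynamic coloring *)

Definition omarks (o : option tree) : list (rect * nat) :=
  match o with Some t => marks t | None => [] end.

Definition ocolor (o : option tree) : rect -> nat :=
  match o with Some t => color t | None => fun _ => 0 end.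

Definition oheight (o : option tree) : nat :=
  match o with Some t => height t | None => 0 end.

Definition apply_update (o : option tree) (u : update) : option tree :=
  match u, o with
  | Ins z, None => Some (Leaf z)
  | Ins z, Some t => Some (insert z t)
  | Del _, None => None
  | Del z, Some t => delete z t
  end.

Definition tree_of (h : list update) : option tree := fold_left apply_update h None.

Definition represents (o : option tree) (X : list rect) : Prop :=
  match o with
  | None => X = []
  | Some t => balanced t /\ StronglySorted rx_le (leaves t) /\ Permutation (leaves t) X
  end.

Lemma differ_by_apply_update o u :
  differ_by (12 * S (oheight o)) (omarks (apply_update o u)) (omarks o).
Proof.
  destruct u as [z|z], o as [t|]; simpl; try apply differ_by_refl.
  - apply differ_by_insert.
  - destruct (delete z t) as [t'|] eqn:D.
    + apply (differ_by_delete z), D.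
    + apply delete_None in D as [p ->]. apply differ_by_refl.
Qed.

Lemma ocolor_changed_mark E o o' p :
  incl (omarks o') (E ++ omarks o) -> ocolor o p < ocolor o' p -> In (p, ocolor o' p) E.
Proof.
  intros Hincl Hlt.
  assert (Hin : In (p, ocolor o' p) (omarks o')).
  { destruct o' as [t'|]; simpl in *; [apply color_in_marks|]; lia. }
  apply Hincl, in_app_or in Hin as [Hin|Hin]; auto.
  destruct o as [t|]; simpl in *; [|contradiction].
  apply marks_le_color in Hin. lia.
Qed.

Lemma recolorings_le_differ_by k X X' o o' :
  NoDup X -> differ_by k (omarks o') (omarks o) ->
  recolorings X X' (ocolor o) (ocolor o') <= k.
Proof.
  intros N (E & HE & H1 & H2). unfold recolorings.
  transitivity (length (map fst E)); [|rewrite length_map; exact HE].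
  apply NoDup_incl_length; [apply NoDup_filter, N|].
  intros p Hp. apply filter_In in Hp as [_ Hp].
  destruct (in_dec _ p X'); [|discriminate].
  apply Bool.negb_true_iff, Nat.eqb_neq in Hp. apply in_map_iff.
  destruct (Nat.lt_total (ocolor o p) (ocolor o' p)) as [Hlt|[|Hlt]]; [|contradiction|].
  - exists (p, ocolor o' p). split; auto. apply (ocolor_changed_mark E o); auto.
  - exists (p, ocolor o p). split; auto. apply (ocolor_changed_mark E o'); auto.
Qed.

Lemma represents_apply_update X o u :
  NoDup X -> represents o X -> legal X u ->
  NoDup (step X u) /\ represents (apply_update o u) (step X u).
Proof.
  intros N R L. destruct u as [z|z]; simpl in L |- *.
  - destruct L as [_ Hz]. split; [constructor; auto|].
    destruct o as [t|]; simpl in R |- *.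
    + destruct R as (Bt & St & Pt).
      split; [apply insert_balanced, Bt|split; [apply insert_sorted, St|]].
      rewrite insert_perm. apply perm_skip, Pt.
    + subst X. repeat constructor.
  - split; [apply remove_NoDup, N|].
    destruct o as [t|]; simpl in R |- *; [|subst X; reflexivity].
    destruct R as (Bt & St & Pt).
    pose proof (delete_leaves z t (Permutation_NoDup (Permutation_sym Pt) N)) as Dl.
    pose proof (Permutation_remove rect_eq_dec z _ _ Pt) as Pd. rewrite <- Dl in Pd.
    destruct (delete z t) as [t'|] eqn:D; simpl in Dl, Pd.
    + split; [apply (delete_balanced z t); auto|split; auto].
      rewrite Dl. apply StronglySorted_remove, St.
    + apply Permutation_nil, Pd.
Qed.

Lemma represents_conflict_free X o :
  NoDup X -> represents o X -> conflict_free X (ocolor o).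
Proof.
  intros N R q Hq. destruct o as [t|]; simpl in R; [|subst X; destruct Hq as (? & [] & _)].
  destruct R as (_ & St & Pt).
  assert (Hin : forall x, In x (leaves t) <-> In x X)
    by (intros x; split; apply Permutation_in; auto using Permutation_sym).
  destruct (color_conflict_free t q) as (a & Ha & Ca & Hmax).
  - apply (Permutation_NoDup (Permutation_sym Pt) N).
  - exact St.
  - destruct Hq as (a & Ha & Ca). exists a. rewrite Hin. auto.
  - exists a. rewrite <- Hin. split; [|split]; auto.
    intros b Hb Cb Hne. rewrite <- Hin in Hb. specialize (Hmax b Hb Cb Hne). simpl. lia.
Qed.

Lemma oheight_le_log2 X o : represents o X -> oheight o <= 2 * Nat.log2 (length X) + 1.
Proof.
  destruct o as [t|]; simpl; [|lia].
  intros (Bt & _ & Pt). rewrite <- (Permutation_length Pt). apply height_le_log2, Bt.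
Qed.

Lemma ocolor_le_oheight o p : ocolor o p <= oheight o.
Proof. destruct o; simpl; auto using color_le_height. Qed.

Lemma num_colors_le X c m : (forall p, c p <= m) -> num_colors X c <= S m.
Proof.
  intros Hc. unfold num_colors. rewrite <- (length_seq (S m) 0).
  apply NoDup_incl_length; [apply NoDup_nodup|].
  intros k Hk. apply nodup_In, in_map_iff in Hk as (p & <- & _).
  apply in_seq. specialize (Hc p). lia.
Qed.

Lemma length_step_le X u : NoDup X -> length X <= S (length (step X u)).
Proof. destruct u; simpl; [lia|apply length_remove_NoDup]. Qed.

Lemma valid_hist_represents h : valid_hist h -> NoDup (cur h) /\ represents (tree_of h) (cur h).
Proof.
  induction 1 as [|h u _ [N R] L]; [split; [constructor|reflexivity]|].
  unfold cur, tree_of in *. rewrite !fold_left_app. apply represents_apply_update; auto.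
Qed.

Theorem mainTheorem2 :
  exists (alg : list update -> rect -> nat) (c : nat),
    forall (h : list update) (u : update),
      valid_hist h -> legal (cur h) u ->
      let n := length (cur (h ++ [u])) in
      conflict_free (cur (h ++ [u])) (alg (h ++ [u])) /\
      (num_colors (cur (h ++ [u])) (alg (h ++ [u])) <= c * (Nat.log2 n + 1))%nat /\
      (recolorings (cur h) (cur (h ++ [u])) (alg h) (alg (h ++ [u]))
         <= c * (Nat.log2 n + 1))%nat.
Proof.
  exists (fun h => ocolor (tree_of h)), 48. intros h u V L. cbv zeta.
  unfold cur, tree_of. rewrite !fold_left_app. fold (cur h) (tree_of h). simpl.
  destruct (valid_hist_represents h V) as [N R].
  destruct (represents_apply_update _ _ u N R L) as [N' R'].
  set (X' := step (cur h) u) in *.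
  pose proof (oheight_le_log2 _ _ R) as Hold. pose proof (oheight_le_log2 _ _ R') as Hnew.
  assert (Hlog : Nat.log2 (length (cur h)) <= S (Nat.log2 (length X'))).
  { rewrite <- Nat.log2_succ_le. apply Nat.log2_le_mono, length_step_le, N. }
  split; [|split].
  - apply represents_conflict_free; auto.
  - eapply Nat.le_trans; [apply num_colors_le, ocolor_le_oheight|]. lia.
  - eapply Nat.le_trans; [apply recolorings_le_differ_by, differ_by_apply_update; exact N|]. lia.
Qed.
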